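(* The function $\tilde H:(0,+\infty)\to\mathbb R$ is monotonically decreasing on $(0,1/\sqrt2)$ and monotonically increasing on $[1/\sqrt2,+\infty)$. Moreover, $$\lim_{q\to 0^+}\tilde H(q)=\lim_{q\to+\infty}\tilde H(q)=1.$$
   Context: For $q>0$, let $\tilde q$ be the root, in the closed upper half-plane $\Im z\ge 0$, of the cubic equation $q(z^3-z)+1=0$ having the smallest positive real part, and define $$\tilde H(q)=\exp\Big(\log\Big|\frac{\tilde q-1}{\tilde q+1}\Big|+q\,\Re(\tilde q^{2})\Big).$$ *)

From mathcomp Require Import all_boot all_order all_algebra.
From mathcomp Require Export complex.
From mathcomp Require Export all_classical all_reals all_analysis.
Set Implicit Arguments. Unset Strict Implicit. Unset Printing Implicit Defensive.
Import Order.TTheory GRing.Theory Num.Theory.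
Local Open Scope ring_scope.
Local Open Scope classical_set_scope.
Local Open Scope complex_scope.
Local Open Scope ring_scope.

Section Defs.
Variable R : realType.

Definition cubic_root (q : R) (z : R[i]) : Prop :=
  q%:C * (z ^+ 3 - z) + 1 = 0.

Definition admissible_root (q : R) (z : R[i]) : Prop :=
  [/\ cubic_root q z, 0 <= complex.Im z & 0 < complex.Re z].

Definition is_tilde_q (q : R) (z : R[i]) : Prop :=
  admissible_root q z /\
  (forall w : R[i], admissible_root q w -> complex.Re z <= complex.Re w).

(* tilde q, chosen by (classical) description; unique for q > 0. *)
Definition tilde_q (q : R) : R[i] := xget 0 (is_tilde_q q).

Definition tilde_H (q : R) : R :=
  let tq := tilde_q q in
  expR (ln (ComplexField.Normc.normc ((tq - 1) / (tq + 1))) + q * complex.Re (tq ^+ 2)).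

End Defs.

From mathcomp Require Import all_boot all_order all_algebra.
From mathcomp Require Import complex.
From mathcomp Require Import all_classical all_reals all_analysis.
From mathcomp Require Import ring lra.
(* For [q <= 3 sqrt 3 / 2] the only admissible root of [q (z^3 - z) + 1] is
   [a + i sqrt (3 a^2 - 1)] with [q (8 a^3 - 2 a) = 1], and for
   [q >= 3 sqrt 3 / 2] the root of smallest real part is the real root
   [t <= 1 / sqrt 3] of [q (t - t^3) = 1]. Along each branch the parameter
   decreases with [q], and [log tilde_H] is an explicit function of it, with
   derivative [2 (12 a^2 - 1) (2 a^2 - 1) / (4 a^2 (4 a^2 - 1)^2)], of the sign
   of [a - 1 / sqrt 2], resp. [(3 t^2 - 1) / (1 - t^2)^2 <= 0]; and
   [a = 1 / sqrt 2] exactly when [q = 1 / sqrt 2]. Both limits are values at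
   [0] of functions continuous there: of [1 / a] as [q -> 0], of [t] as
   [q -> +oo]. *)

Set Implicit Arguments.
Unset Strict Implicit.
Unset Printing Implicit Defensive.
Import Order.TTheory GRing.Theory Num.Theory.
Import numFieldNormedType.Exports.
Local Open Scope classical_set_scope.
Local Open Scope ring_scope.

Section PointwiseDerive.
Variable R : realType.
Implicit Types (f g : R -> R) (x df dg : R).

Lemma is_derive_cst_pt (c x : R) : is_derive x 1 (fun _ => c) 0.
Proof. exact: is_derive_cst. Qed.

Lemma is_derive_id_pt x : is_derive x 1 (fun y => y) 1.
Proof. exact: is_derive_id. Qed.

Lemma is_deriveD_pt f g x df dg : is_derive x 1 f df -> is_derive x 1 g dg ->
  is_derive x 1 (fun y => f y + g y) (df + dg).
Proof. exact: is_deriveD. Qed.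

Lemma is_deriveN_pt f x df : is_derive x 1 f df ->
  is_derive x 1 (fun y => - f y) (- df).
Proof. exact: is_deriveN. Qed.

Lemma is_deriveM_pt f g x df dg : is_derive x 1 f df -> is_derive x 1 g dg ->
  is_derive x 1 (fun y => f y * g y) (f x * dg + g x * df).
Proof. exact: is_deriveM. Qed.

Lemma is_deriveV_pt f x df : f x != 0 -> is_derive x 1 f df ->
  is_derive x 1 (fun y => (f y)^-1) (- (f x) ^- 2 * df).
Proof. exact: is_deriveV. Qed.

Lemma is_deriveX_pt f x df n : is_derive x 1 f df ->
  is_derive x 1 (fun y => f y ^+ n) (n%:R * f x ^+ n.-1 * df).
Proof.
move=> fdf; elim: n => [|n IH].
  by rewrite expr0 !mul0r; exact: is_derive_cst_pt.
apply: is_derive_eq.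
  have -> : (fun y => f y ^+ n.+1) = (fun y => f y * f y ^+ n).
    by apply/funext => y; rewrite exprS.
  exact: is_deriveM_pt fdf IH.
by case: n {IH} => [|n] /=; rewrite ?expr0 ?exprS; ring.
Qed.

Lemma is_derive_ln_pt f x df : 0 < f x -> is_derive x 1 f df ->
  is_derive x 1 (fun y => ln (f y)) (df / f x).
Proof.
by move=> fx0 fdf; rewrite mulrC; exact: is_derive1_comp (is_derive1_ln fx0) fdf.
Qed.

Lemma is_derive_expR_pt f x df : is_derive x 1 f df ->
  is_derive x 1 (fun y => expR (f y)) (expR (f x) * df).
Proof. by move=> fdf; exact: is_derive1_comp (is_derive_expR (f x)) fdf. Qed.

Lemma is_derive_continuous f x df : is_derive x 1 f df -> {for x, continuous f}.
Proof. by case=> fx _; apply/differentiable_continuous/derivable1_diffP. Qed.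

Lemma ger0_is_derive_le f (Df : R -> R) x y : x <= y ->
  (forall z, x <= z <= y -> is_derive z 1 f (Df z)) ->
  (forall z, x <= z <= y -> 0 <= Df z) -> f x <= f y.
Proof.
move=> xy fDf Df_ge0.
have fDf_oo z : z \in `]x, y[ -> is_derive z 1 f (Df z).
  by rewrite in_itv /= => /andP[xz zy]; apply: fDf; rewrite !ltW.
have f_cont : {within `[x, y], continuous f}.
  apply: continuous_in_subspaceT => z; rewrite inE /= in_itv /= => xzy.
  exact: is_derive_continuous (fDf z xzy).
have [z zxy fxy] := MVT_segment xy fDf_oo f_cont.
rewrite -subr_ge0 fxy mulr_ge0 ?subr_ge0 //.
by apply: Df_ge0; rewrite in_itv /= in zxy.
Qed.

Lemma ler0_is_derive_ge f (Df : R -> R) x y : x <= y ->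
  (forall z, x <= z <= y -> is_derive z 1 f (Df z)) ->
  (forall z, x <= z <= y -> Df z <= 0) -> f y <= f x.
Proof.
move=> xy fDf Df_le0; rewrite -lerN2.
apply: (ger0_is_derive_le (f := fun z => - f z) (Df := fun z => - Df z)) => // z xzy.
- exact/is_deriveN_pt/fDf.
- by rewrite oppr_ge0 Df_le0.
Qed.

End PointwiseDerive.

Lemma mul_eq1_anti (R : realFieldType) (q q' u u' : R) :
  q * u = 1 -> q' * u' = 1 -> 0 < u -> q <= q' -> u' <= u.
Proof.
move=> qu1 qu1' u0 qq'.
have q0 : 0 < q by rewrite ltNge; apply/negP => q_le0; nra.
have q'0 : 0 < q' by exact: lt_le_trans qq'.
rewrite -(ler_pM2l q'0) qu1' -qu1 ler_pM2r //.
Qed.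

Section TildeH.
Local Open Scope complex_scope.
Variable R : realType.
Implicit Types (q a t x y : R) (w : R[i]).

Lemma cubic_rootE q x y : cubic_root q (x +i* y) <->
  q * (x ^+ 3 - 3 * x * y ^+ 2 - x) + 1 = 0 /\ q * (3 * x ^+ 2 * y - y ^+ 3 - y) = 0.
Proof.
rewrite /cubic_root.
have -> : q%:C * ((x +i* y) ^+ 3 - (x +i* y)) + 1 =
    (q * (x ^+ 3 - 3 * x * y ^+ 2 - x) + 1) +i* (q * (3 * x ^+ 2 * y - y ^+ 3 - y)).
  rewrite !exprS expr0; apply/eqP; rewrite eq_complex /=.
  by apply/andP; split; apply/eqP; ring.
by split=> [[-> ->] | [-> ->]].
Qed.

Definition isqrt3 : R := (Num.sqrt 3)^-1.
Definition isqrt2 : R := (Num.sqrt 2)^-1.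

Lemma isqrt3_gt0 : 0 < isqrt3.
Proof. by rewrite invr_gt0 sqrtr_gt0. Qed.

Lemma isqrt3_sqr : isqrt3 ^+ 2 * 3 = 1.
Proof. by rewrite exprVn sqr_sqrtr // mulVf. Qed.

Lemma isqrt2_gt0 : 0 < isqrt2.
Proof. by rewrite invr_gt0 sqrtr_gt0. Qed.

Lemma isqrt2_sqr : isqrt2 ^+ 2 * 2 = 1.
Proof. by rewrite exprVn sqr_sqrtr // mulVf. Qed.

(* For an admissible root [a + i b] with [b > 0], the imaginary part of the
   cubic forces [b^2 = 3 a^2 - 1] and the real part then reads
   [q (8 a^3 - 2 a) = 1]; for a real root [t] it reads [q (t - t^3) = 1]. *)
Definition qinvC a : R := 8 * a ^+ 3 - 2 * a.
Definition qinvR t : R := t - t ^+ 3.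

(* The value [3 sqrt 3 / 2] of [q] at which the two roots [a +- i b] merge
   into the double real root [1 / sqrt 3]. *)
Definition q_crit : R := 3 / (2 * isqrt3).

Lemma qinvC_gt0 a : isqrt3 <= a -> 0 < qinvC a.
Proof.
move=> ha; have c0 := isqrt3_gt0; have cs := isqrt3_sqr.
have a0 : 0 < a := lt_le_trans c0 ha.
have a2 : 1 <= 3 * a ^+ 2 by nra.
have -> : qinvC a = 2 * a * (4 * a ^+ 2 - 1) by rewrite /qinvC; ring.
by rewrite !mulr_gt0 // subr_gt0; nra.
Qed.

Lemma qinvC_lt a a' : isqrt3 <= a -> a < a' -> qinvC a < qinvC a'.
Proof.
move=> ha aa'; have c0 := isqrt3_gt0; have cs := isqrt3_sqr.
have : 0 < (a' - a) * (8 * (a' ^+ 2 + a' * a + a ^+ 2) - 2) by apply: mulr_gt0; nra.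
rewrite /qinvC; nra.
Qed.

Lemma qinvR_gt0 t : 0 < t <= isqrt3 -> 0 < qinvR t.
Proof.
case/andP=> t0 tc; have c0 := isqrt3_gt0; have cs := isqrt3_sqr.
have -> : qinvR t = t * (1 - t ^+ 2) by rewrite /qinvR; ring.
by apply: mulr_gt0 => //; nra.
Qed.

Lemma qinvR_lt t t' : 0 < t -> t < t' -> t' <= isqrt3 -> qinvR t < qinvR t'.
Proof.
move=> t0 tt' t'c; have c0 := isqrt3_gt0; have cs := isqrt3_sqr.
have : 0 < (t' - t) * (1 - (t' ^+ 2 + t' * t + t ^+ 2)) by apply: mulr_gt0; nra.
rewrite /qinvR; nra.
Qed.

Lemma qinvC_isqrt2 : isqrt2 * qinvC isqrt2 = 1.
Proof. have := isqrt2_sqr; rewrite /qinvC; nra. Qed.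

Lemma isqrt3_lt_isqrt2 : isqrt3 < isqrt2.
Proof.
have c0 := isqrt3_gt0; have cs := isqrt3_sqr.
have w0 := isqrt2_gt0; have ws := isqrt2_sqr.
nra.
Qed.

Lemma isqrt2_lt_q_crit : isqrt2 < q_crit.
Proof.
have c0 := isqrt3_gt0; have cs := isqrt3_sqr.
have w0 := isqrt2_gt0; have ws := isqrt2_sqr.
have : 1 <= q_crit by rewrite ler_pdivlMr ?mulr_gt0 //; nra.
nra.
Qed.

Lemma qinvC_anti q q' a a' : isqrt3 <= a -> isqrt3 <= a' ->
  q * qinvC a = 1 -> q' * qinvC a' = 1 -> q <= q' -> a' <= a.
Proof.
move=> ha ha' hq hq' qq'; rewrite leNgt; apply/negP => aa'.
have := mul_eq1_anti hq hq' (qinvC_gt0 ha) qq'.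
by rewrite leNgt qinvC_lt.
Qed.

Lemma qinvR_anti q q' t t' : 0 < t <= isqrt3 -> 0 < t' <= isqrt3 ->
  q * qinvR t = 1 -> q' * qinvR t' = 1 -> q <= q' -> t' <= t.
Proof.
move=> ht /andP[t'0 t'c] hq hq' qq'; rewrite leNgt; apply/negP => tt'.
have := mul_eq1_anti hq hq' (qinvR_gt0 ht) qq'.
by case/andP: ht => t0 _; rewrite leNgt qinvR_lt.
Qed.

Lemma admissible_rootC q a : isqrt3 <= a -> q * qinvC a = 1 ->
  admissible_root q (a +i* Num.sqrt (3 * a ^+ 2 - 1)).
Proof.
move=> ha hq; have c0 := isqrt3_gt0; have cs := isqrt3_sqr.
have a0 : 0 < a := lt_le_trans c0 ha.
have b2 : Num.sqrt (3 * a ^+ 2 - 1) ^+ 2 = 3 * a ^+ 2 - 1 by rewrite sqr_sqrtr //; nra.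
split=> /=; [|exact: sqrtr_ge0|by []].
apply/cubic_rootE; split; first by rewrite b2; move: hq; rewrite /qinvC; nra.
set b := Num.sqrt _ in b2 *.
have -> : 3 * a ^+ 2 * b - b ^+ 3 - b = b * (3 * a ^+ 2 - 1 - b ^+ 2) by ring.
by rewrite b2 subrr !mulr0.
Qed.

Lemma isqrt3_le x : 0 < x -> 1 <= 3 * x ^+ 2 -> isqrt3 <= x.
Proof.
move=> x0 x2; have c0 := isqrt3_gt0; have cs := isqrt3_sqr.
rewrite leNgt; apply/negP => xc; nra.
Qed.

Lemma admissible_rootP q x y : admissible_root q (x +i* y) ->
  (y = 0 /\ q * qinvR x = 1) \/ (y ^+ 2 = 3 * x ^+ 2 - 1 /\ q * qinvC x = 1).
Proof.
case=> /cubic_rootE[re_eq im_eq] /= y0 x0.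
have q0 : q != 0 by apply: contra_eq_neq re_eq => ->; rewrite mul0r add0r oner_neq0.
have : q * (y * (3 * x ^+ 2 - 1 - y ^+ 2)) = 0 by rewrite -im_eq; ring.
move/eqP; rewrite !mulf_eq0 (negbTE q0) /= => /orP[/eqP y_eq0 | /eqP y2].
  by left; split=> //; move: re_eq; rewrite y_eq0 /qinvR; nra.
have {}y2 : y ^+ 2 = 3 * x ^+ 2 - 1 by lra.
by right; split=> //; move: re_eq; rewrite y2 /qinvC; nra.
Qed.

Lemma admissible_rootC_uniq q a w : isqrt3 <= a -> q * qinvC a = 1 ->
  admissible_root q w -> w = a +i* Num.sqrt (3 * a ^+ 2 - 1).
Proof.
move=> ha hq; case: w => x y hw; have [_ /= y0 x0] := hw.
have c0 := isqrt3_gt0; have cs := isqrt3_sqr.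
have a0 : 0 < a := lt_le_trans c0 ha.
case: (admissible_rootP hw) => [[-> hqx] | [y2 hqx]].
  have : q * ((x + 2 * a) * ((x - a) ^+ 2 + (3 * a ^+ 2 - 1))) = 0.
    by move: hq hqx; rewrite /qinvC /qinvR; nra.
  have q0 : q != 0.
    by apply/eqP => q0; move: hq; rewrite q0 mul0r => /eqP; rewrite eq_sym oner_eq0.
  move/eqP; rewrite !mulf_eq0 (negbTE q0) /= => /orP[/eqP x2a | /eqP sum0].
    by exfalso; lra.
  have xa : (x - a) ^+ 2 = 0 by have := sqr_ge0 (x - a); nra.
  have a2 : 3 * a ^+ 2 - 1 = 0 by lra.
  by move/eqP: xa; rewrite sqrf_eq0 subr_eq0 => /eqP ->; rewrite a2 sqrtr0.
have xc : isqrt3 <= x by apply: isqrt3_le => //; have := sqr_ge0 y; lra.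
have xa : x = a.
  apply/eqP; rewrite eq_le (qinvC_anti ha xc hq hqx) //.
  exact: qinvC_anti xc ha hqx hq _.
by rewrite -xa -y2 sqrtr_sqr ger0_norm.
Qed.

Lemma admissible_rootR q t : 0 < t <= isqrt3 -> q * qinvR t = 1 ->
  admissible_root q (t +i* 0).
Proof.
case/andP=> t0 _ hq; split=> //=.
by apply/cubic_rootE; split; [move: hq; rewrite /qinvR; nra | ring].
Qed.

Lemma admissible_rootR_min q t x y : 0 < t <= isqrt3 -> q * qinvR t = 1 ->
  admissible_root q (x +i* y) -> t <= x /\ (x <= t -> x +i* y = t +i* 0).
Proof.
move=> ht hq hw; have [_ /= y0 x0] := hw; have /andP[t0 tc] := ht.
have c0 := isqrt3_gt0; have cs := isqrt3_sqr.
case: (admissible_rootP hw) => [[-> hqx] | [y2 _]].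
  have tx : t <= x.
    case: (leP x isqrt3) => [xc | /ltW]; last exact: le_trans.
    by apply: qinvR_anti hqx hq _ => //; rewrite x0.
  by split=> // xt; suff -> : x = t by []; lra.
have xc : isqrt3 <= x by apply: isqrt3_le => //; have := sqr_ge0 y; lra.
split=> [|xt]; first exact: le_trans xc.
have xc' : x = isqrt3 by lra.
have y_eq0 : y = 0 by apply/eqP; rewrite -sqrf_eq0 y2 xc'; apply/eqP; lra.
by rewrite y_eq0; congr (_ +i* _); lra.
Qed.

Lemma tilde_qC q a : isqrt3 <= a -> q * qinvC a = 1 ->
  tilde_q q = a +i* Num.sqrt (3 * a ^+ 2 - 1).
Proof.
move=> ha hq; apply: xget_unique => [|w [hw _]]; last exact: admissible_rootC_uniq hw.
split=> [|w hw]; first exact: admissible_rootC.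
by rewrite (admissible_rootC_uniq ha hq hw).
Qed.

Lemma tilde_qR q t : 0 < t <= isqrt3 -> q * qinvR t = 1 -> tilde_q q = t +i* 0.
Proof.
move=> ht hq; apply: xget_unique => [|[x y] [hw hmin]].
  split=> [|[x y] hw]; first exact: admissible_rootR.
  by have [] := admissible_rootR_min ht hq hw.
have /= xt := hmin _ (admissible_rootR ht hq).
by have [_ ->] := admissible_rootR_min ht hq hw.
Qed.

Lemma ln_sqrtr x : 0 < x -> ln (Num.sqrt x) = ln x / 2.
Proof.
move=> x0; have sx0 : 0 < Num.sqrt x by rewrite sqrtr_gt0.
by have := lnXn 2 sx0; rewrite sqr_sqrtr ?ltW // => ->; rewrite -mulr_natr; field.
Qed.

Definition logHC a : R :=
  (ln (4 * a ^+ 2 - 2 * a) - ln (4 * a ^+ 2 + 2 * a)) / 2 + (1 - 2 * a ^+ 2) / qinvC a.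
Definition logHR t : R := ln (1 - t) - ln (1 + t) + t / (1 - t ^+ 2).

Lemma tilde_HC q a : isqrt3 <= a -> q * qinvC a = 1 -> tilde_H q = expR (logHC a).
Proof.
move=> ha hq; rewrite /tilde_H (tilde_qC ha hq); congr expR.
have c0 := isqrt3_gt0; have cs := isqrt3_sqr.
have a0 : 0 < a := lt_le_trans c0 ha.
set b := Num.sqrt _; have b2 : b ^+ 2 = 3 * a ^+ 2 - 1 by rewrite sqr_sqrtr //; nra.
have P0 := qinvC_gt0 ha.
have A0 : 0 < 4 * a ^+ 2 - 2 * a by nra.
have B0 : 0 < 4 * a ^+ 2 + 2 * a by nra.
have -> : q = (qinvC a)^-1 by rewrite -(mulfK (lt0r_neq0 P0) q) hq div1r.
have -> : a +i* b - 1 = (a - 1) +i* b.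
  by apply/eqP; rewrite eq_complex /=; apply/andP; split; apply/eqP; ring.
have -> : a +i* b + 1 = (a + 1) +i* b.
  by apply/eqP; rewrite eq_complex /=; apply/andP; split; apply/eqP; ring.
rewrite ComplexField.Normc.normcM ComplexField.Normc.normcV /=.
have -> : (a - 1) ^+ 2 + b ^+ 2 = 4 * a ^+ 2 - 2 * a by rewrite b2; ring.
have -> : (a + 1) ^+ 2 + b ^+ 2 = 4 * a ^+ 2 + 2 * a by rewrite b2; ring.
rewrite lnM ?posrE ?invr_gt0 ?sqrtr_gt0 // lnV ?posrE ?sqrtr_gt0 // !ln_sqrtr //.
have -> : a * a - b * b = 1 - 2 * a ^+ 2 by rewrite -!expr2 b2; ring.
by rewrite /logHC mulrC; ring.
Qed.

Lemma tilde_HR q t : 0 < t <= isqrt3 -> q * qinvR t = 1 -> tilde_H q = expR (logHR t).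
Proof.
move=> ht hq; rewrite /tilde_H (tilde_qR ht hq); congr expR.
have c0 := isqrt3_gt0; have cs := isqrt3_sqr.
have P0 := qinvR_gt0 ht; case/andP: ht => t0 tc.
have t1 : t < 1 by nra.
have -> : q = (qinvR t)^-1 by rewrite -(mulfK (lt0r_neq0 P0) q) hq div1r.
have -> : t +i* 0 - 1 = (t - 1) +i* 0.
  by apply/eqP; rewrite eq_complex /=; apply/andP; split; apply/eqP; ring.
have -> : t +i* 0 + 1 = (t + 1) +i* 0.
  by apply/eqP; rewrite eq_complex /=; apply/andP; split; apply/eqP; ring.
rewrite ComplexField.Normc.normcM ComplexField.Normc.normcV /=.
rewrite !expr0n /= !addr0 !sqrtr_sqr ltr0_norm ?subr_lt0 // gtr0_norm; last lra.
rewrite lnM ?posrE ?invr_gt0 ?lnV ?posrE; try lra.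
rewrite /logHR /qinvR opprB (addrC t 1) mul0r subr0 -expr2; congr (_ + _).
by field; rewrite -[t - _]/(qinvR t) (lt0r_neq0 P0) andbT; apply/eqP; nra.
Qed.

Definition dlogHC a : R :=
  2 * (12 * a ^+ 2 - 1) * (2 * a ^+ 2 - 1) / (4 * a ^+ 2 * (4 * a ^+ 2 - 1) ^+ 2).
Definition dlogHR t : R := (3 * t ^+ 2 - 1) / (1 - t ^+ 2) ^+ 2.

Lemma is_derive_logHC a : 1 / 2 < a -> is_derive a 1 logHC (dlogHC a).
Proof.
move=> ha.
have A0 : 0 < 4 * a ^+ 2 - 2 * a by nra.
have B0 : 0 < 4 * a ^+ 2 + 2 * a by nra.
have P0 : 0 < qinvC a by rewrite /qinvC; nra.
have dA := is_deriveD_pt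
  (is_deriveM_pt (is_derive_cst_pt 4 a) (is_deriveX_pt 2 (is_derive_id_pt a)))
  (is_deriveN_pt (is_deriveM_pt (is_derive_cst_pt 2 a) (is_derive_id_pt a))).
have dB := is_deriveD_pt
  (is_deriveM_pt (is_derive_cst_pt 4 a) (is_deriveX_pt 2 (is_derive_id_pt a)))
  (is_deriveM_pt (is_derive_cst_pt 2 a) (is_derive_id_pt a)).
have dP := is_deriveD_pt
  (is_deriveM_pt (is_derive_cst_pt 8 a) (is_deriveX_pt 3 (is_derive_id_pt a)))
  (is_deriveN_pt (is_deriveM_pt (is_derive_cst_pt 2 a) (is_derive_id_pt a))).
have dNum := is_deriveD_pt (is_derive_cst_pt 1 a)
  (is_deriveN_pt (is_deriveM_pt (is_derive_cst_pt 2 a) (is_deriveX_pt 2 (is_derive_id_pt a)))).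
apply: (is_derive_eq (is_deriveD_pt
  (is_deriveM_pt (is_deriveD_pt (is_derive_ln_pt _ dA) (is_deriveN_pt (is_derive_ln_pt _ dB)))
     (is_derive_cst_pt 2^-1 a))
  (is_deriveM_pt dNum (is_deriveV_pt _ dP)))) => //; first exact: lt0r_neq0.
rewrite /dlogHC /qinvC /=.
have a0 : a != 0 by apply/eqP; lra.
have a2 : 4 * a ^+ 2 - 1 != 0 by apply/eqP; nra.
by field; rewrite a0 a2 !lt0r_neq0.
Qed.

Lemma is_derive_logHR t : -1 < t < 1 -> is_derive t 1 logHR (dlogHR t).
Proof.
case/andP=> t_gtN1 t_lt1.
have dM := is_deriveD_pt (is_derive_cst_pt 1 t) (is_deriveN_pt (is_derive_id_pt t)).
have dP := is_deriveD_pt (is_derive_cst_pt 1 t) (is_derive_id_pt t).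
have dS := is_deriveD_pt (is_derive_cst_pt 1 t)
  (is_deriveN_pt (is_deriveX_pt 2 (is_derive_id_pt t))).
apply: (is_derive_eq (is_deriveD_pt
  (is_deriveD_pt (is_derive_ln_pt _ dM) (is_deriveN_pt (is_derive_ln_pt _ dP)))
  (is_deriveM_pt (is_derive_id_pt t) (is_deriveV_pt _ dS)))).
- by rewrite /=; lra.
- by rewrite /=; lra.
- by apply/eqP; rewrite /=; nra.
have t1 : 1 - t != 0 by apply/eqP; lra.
have t2 : 1 + t != 0 by apply/eqP; lra.
have t3 : 1 - t ^+ 2 != 0 by apply/eqP; nra.
by rewrite /dlogHR /=; field; rewrite t1 t2 t3.
Qed.

Lemma logHC_nondecr x y : isqrt2 <= x -> x <= y -> logHC x <= logHC y.
Proof.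
move=> wx xy; have w0 := isqrt2_gt0; have ws := isqrt2_sqr.
apply: (ger0_is_derive_le (Df := dlogHC)) => // z /andP[xz zy].
  by apply: is_derive_logHC; nra.
rewrite /dlogHC divr_ge0 ?mulr_ge0 ?sqr_ge0 //; nra.
Qed.

Lemma logHC_nonincr x y : isqrt3 <= x -> x <= y -> y <= isqrt2 -> logHC y <= logHC x.
Proof.
move=> cx xy yw; have w0 := isqrt2_gt0; have ws := isqrt2_sqr.
have c0 := isqrt3_gt0; have cs := isqrt3_sqr.
apply: (ler0_is_derive_ge (Df := dlogHC)) => // z /andP[xz zy].
  by apply: is_derive_logHC; nra.
rewrite /dlogHC mulr_le0_ge0 ?invr_ge0 ?mulr_ge0_le0 ?mulr_ge0 ?sqr_ge0 //; nra.
Qed.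

Lemma logHR_nonincr x y : 0 < x -> x <= y -> y <= isqrt3 -> logHR y <= logHR x.
Proof.
move=> x0 xy yc; have c0 := isqrt3_gt0; have cs := isqrt3_sqr.
apply: (ler0_is_derive_ge (Df := dlogHR)) => // z /andP[xz zy].
  by apply: is_derive_logHR; apply/andP; split; nra.
rewrite /dlogHR mulr_le0_ge0 ?invr_ge0 ?sqr_ge0 //; nra.
Qed.

Lemma continuous_qinvC : continuous qinvC.
Proof.
by move=> z; apply: is_derive_continuous.
Qed.

Lemma continuous_qinvR : continuous qinvR.
Proof.
by move=> z; apply: is_derive_continuous.
Qed.

Lemma exists_rootC q : 0 < q -> q <= q_crit -> exists2 a, isqrt3 <= a & q * qinvC a = 1.
Proof.
move=> q0 qQ; have c0 := isqrt3_gt0; have cs := isqrt3_sqr.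
have {}qQ : q * (2 * isqrt3) <= 3 by rewrite ler_pdivlMr ?mulr_gt0 // in qQ.
have u0 : 0 < q^-1 by rewrite invr_gt0.
have qu : q * q^-1 = 1 by rewrite mulfV ?gt_eqF.
have c1 : isqrt3 <= 1 by nra.
have cb : isqrt3 <= 1 + q^-1 by lra.
have qinvC_c : qinvC isqrt3 <= q^-1 by rewrite -(ler_pM2l q0) qu /qinvC; nra.
have qinvC_b : q^-1 <= qinvC (1 + q^-1).
  have : 6 * (1 + q^-1) <= qinvC (1 + q^-1) by rewrite /qinvC; nra.
  lra.
have [|a] := IVT (v := q^-1) cb (continuous_subspaceT continuous_qinvC).
  by rewrite ge_min le_max qinvC_c qinvC_b orbT.
by rewrite in_itv /= => /andP[ca _] qa; exists a; rewrite // qa qu.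
Qed.

Lemma exists_rootR q : q_crit <= q -> exists2 t, 0 < t <= isqrt3 & q * qinvR t = 1.
Proof.
move=> qQ; have c0 := isqrt3_gt0; have cs := isqrt3_sqr.
have q0 : 0 < q by apply: lt_le_trans qQ; rewrite divr_gt0 ?mulr_gt0.
have {}qQ : 3 <= q * (2 * isqrt3) by rewrite ler_pdivrMr ?mulr_gt0 // in qQ.
have u0 : 0 < q^-1 by rewrite invr_gt0.
have qu : q * q^-1 = 1 by rewrite mulfV ?gt_eqF.
have lc : q^-1 / 2 <= isqrt3 by rewrite ler_pdivrMr // -(ler_pM2l q0) mulrA qu; nra.
have qinvR_l : qinvR (q^-1 / 2) <= q^-1.
  by rewrite /qinvR; have := exprn_ge0 3 (ltW (divr_gt0 u0 (@ltr0Sn R 1))); lra.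
have qinvR_c : q^-1 <= qinvR isqrt3 by rewrite -(ler_pM2l q0) qu /qinvR; nra.
have [|t] := IVT (v := q^-1) lc (continuous_subspaceT continuous_qinvR).
  by rewrite ge_min le_max qinvR_l qinvR_c orbT.
rewrite in_itv /= => /andP[lt tc] qt; exists t; last by rewrite qt qu.
by rewrite tc andbT (lt_le_trans _ lt) // divr_gt0.
Qed.

Lemma tilde_H_nonincr x y : 0 < x -> x <= y -> y < isqrt2 -> tilde_H y <= tilde_H x.
Proof.
move=> x0 xy yw; have yQ := ltW (lt_trans yw isqrt2_lt_q_crit).
have [ax hax hqx] := exists_rootC x0 (le_trans xy yQ).
have [ay hay hqy] := exists_rootC (lt_le_trans x0 xy) yQ.
rewrite (tilde_HC hax hqx) (tilde_HC hay hqy) ler_expR.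
apply: logHC_nondecr; last exact: qinvC_anti hqx hqy xy.
exact: qinvC_anti hay (ltW isqrt3_lt_isqrt2) hqy qinvC_isqrt2 (ltW yw).
Qed.

Lemma tilde_H_nondecrC x y : isqrt2 <= x -> x <= y -> y <= q_crit ->
  tilde_H x <= tilde_H y.
Proof.
move=> wx xy yQ; have x0 := lt_le_trans isqrt2_gt0 wx.
have [ax hax hqx] := exists_rootC x0 (le_trans xy yQ).
have [ay hay hqy] := exists_rootC (lt_le_trans x0 xy) yQ.
rewrite (tilde_HC hax hqx) (tilde_HC hay hqy) ler_expR.
apply: logHC_nonincr => //; first exact: qinvC_anti hqx hqy xy.
exact: qinvC_anti (ltW isqrt3_lt_isqrt2) hax qinvC_isqrt2 hqx wx.
Qed.

Lemma tilde_H_nondecrR x y : q_crit <= x -> x <= y -> tilde_H x <= tilde_H y.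
Proof.
move=> Qx xy.
have [tx htx hqx] := exists_rootR Qx.
have [ty hty hqy] := exists_rootR (le_trans Qx xy).
rewrite (tilde_HR htx hqx) (tilde_HR hty hqy) ler_expR.
have /andP[ty0 _] := hty; have /andP[_ txc] := htx.
by apply: logHR_nonincr => //; exact: qinvR_anti hqx hqy xy.
Qed.

Lemma tilde_H_nondecr x y : isqrt2 <= x -> x <= y -> tilde_H x <= tilde_H y.
Proof.
move=> wx xy; case: (leP y q_crit) => yQ; first exact: tilde_H_nondecrC.
case: (leP q_crit x) => Qx; first exact: tilde_H_nondecrR.
apply: (@le_trans _ _ (tilde_H q_crit)); first exact: tilde_H_nondecrC (ltW Qx) _.
exact: tilde_H_nondecrR (ltW yQ).
Qed.

(* [expR (logHC a)] as a function of [u = 1 / a], which is regular at [u = 0]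
   (i.e. at [q = 0]). *)
Definition HCinv u : R :=
  expR ((ln (4 - 2 * u) - ln (4 + 2 * u)) / 2 + (u ^+ 3 - 2 * u) / (8 - 2 * u ^+ 2)).

Lemma HCinv0 : HCinv 0 = 1.
Proof.
rewrite /HCinv !mulr0 subr0 addr0 subrr mul0r add0r expr0n /= subr0 mul0r.
exact: expR0.
Qed.

Lemma HCinv_continuous u : -2 < u < 2 -> {for u, continuous HCinv}.
Proof.
case/andP=> u_gtN2 u_lt2.
have dA := is_deriveD_pt (is_derive_cst_pt 4 u)
  (is_deriveN_pt (is_deriveM_pt (is_derive_cst_pt 2 u) (is_derive_id_pt u))).
have dB := is_deriveD_pt (is_derive_cst_pt 4 u)
  (is_deriveM_pt (is_derive_cst_pt 2 u) (is_derive_id_pt u)).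
have dNum := is_deriveD_pt (is_deriveX_pt 3 (is_derive_id_pt u))
  (is_deriveN_pt (is_deriveM_pt (is_derive_cst_pt 2 u) (is_derive_id_pt u))).
have dDen := is_deriveD_pt (is_derive_cst_pt 8 u)
  (is_deriveN_pt (is_deriveM_pt (is_derive_cst_pt 2 u) (is_deriveX_pt 2 (is_derive_id_pt u)))).
apply: (@is_derive_continuous _ _ _ _ (is_derive_expR_pt (is_deriveD_pt
  (is_deriveM_pt (is_deriveD_pt (is_derive_ln_pt _ dA) (is_deriveN_pt (is_derive_ln_pt _ dB)))
     (is_derive_cst_pt 2^-1 u))
  (is_deriveM_pt dNum (is_deriveV_pt _ dDen))))).
- by rewrite /=; lra.
- by rewrite /=; lra.
- by apply/eqP; rewrite /=; nra.
Qed.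

Lemma tilde_H_HCinv q a : isqrt3 <= a -> q * qinvC a = 1 -> tilde_H q = HCinv a^-1.
Proof.
move=> ha hq; rewrite (tilde_HC ha hq) /HCinv /logHC; congr expR.
have c0 := isqrt3_gt0; have cs := isqrt3_sqr.
have a0 : 0 < a := lt_le_trans c0 ha.
have a_neq0 : a != 0 by rewrite gt_eqF.
have a2 : 0 < a ^+ 2 by rewrite exprn_gt0.
have p1 : 0 < 4 - 2 * a^-1.
  by rewrite (_ : _ - _ = (4 * a - 2) / a) ?divr_gt0 //; [nra | field].
have p2 : 0 < 4 + 2 * a^-1 by rewrite ltr_wpDr ?mulr_ge0 ?invr_ge0 ?ltW.
have -> : 4 * a ^+ 2 - 2 * a = a ^+ 2 * (4 - 2 * a^-1) by field.
have -> : 4 * a ^+ 2 + 2 * a = a ^+ 2 * (4 + 2 * a^-1) by field.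
rewrite !lnM ?posrE // (_ : forall x y z : R, x + y - (x + z) = y - z); last by move=> *; ring.
congr (_ + _); rewrite /qinvC.
have h1 : 8 * a ^+ 2 - 2 != 0 by apply/eqP; nra.
have h2 : 8 * a ^+ 3 - 2 * a != 0 by apply/eqP; nra.
have h3 : 8 - 2 * a^-1 ^+ 2 != 0.
  rewrite (_ : _ - _ = (8 * a ^+ 2 - 2) / a ^+ 2); last by field.
  by rewrite mulf_neq0 // invr_eq0 gt_eqF.
by field; rewrite a_neq0 h1 h2.
Qed.

Lemma rootC_gt q a M : isqrt3 <= a -> q * qinvC a = 1 -> q * (8 * M ^+ 3) < 1 -> M < a.
Proof.
move=> ha hq qM; have c0 := isqrt3_gt0.
have a0 : 0 < a := lt_le_trans c0 ha.
have q0 : 0 < q by rewrite ltNge; apply/negP => q0; have := qinvC_gt0 ha; nra.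
rewrite ltNge; apply/negP => aM.
have a3M : a ^+ 3 <= M ^+ 3 by rewrite lerXn2r // ?nnegrE ltW // (lt_le_trans a0).
by move: hq; rewrite /qinvC; nra.
Qed.

Lemma rootR_le q t : 0 < t <= isqrt3 -> q * qinvR t = 1 -> 2 * (q * t) <= 3.
Proof.
move=> ht hq; have c0 := isqrt3_gt0; have cs := isqrt3_sqr.
have q0 : 0 < q by rewrite ltNge; apply/negP => q0; have := qinvR_gt0 ht; nra.
case/andP: ht => t0 tc.
have t2 : 3 * t ^+ 2 <= 1 by nra.
by move: hq; rewrite /qinvR; nra.
Qed.

Lemma tilde_H_cvg0 : tilde_H x @[x --> (0 : R)^'+] --> (1 : R).
Proof.
apply/cvgrPdist_lt => e e0.
have /cvgrPdist_lt/(_ e e0)/nbhs_ballP[d /= d0 Hd] : HCinv u @[u --> (0 : R)] --> (1 : R).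
  by rewrite -HCinv0; apply: HCinv_continuous; apply/andP; split; lra.
have K0 : 0 < (8 * d^-1 ^+ 3)^-1 by rewrite invr_gt0 mulr_gt0 // exprn_gt0 ?invr_gt0.
near=> q.
have q0 : 0 < q by near: q; exact: nbhs_right_gt.
have qK : q < (8 * d^-1 ^+ 3)^-1 by near: q; exact: nbhs_right_lt.
have qQ : q < q_crit by near: q; apply: nbhs_right_lt; rewrite divr_gt0 ?mulr_gt0 ?isqrt3_gt0.
have [a ha hq] := exists_rootC q0 (ltW qQ).
have a0 : 0 < a := lt_le_trans isqrt3_gt0 ha.
rewrite (tilde_H_HCinv ha hq); apply: Hd.
rewrite /ball /= sub0r normrN gtr0_norm ?invr_gt0 //.
rewrite -[d]invrK ltf_pV2 ?posrE ?invr_gt0 //; apply: rootC_gt ha hq _.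
by rewrite -ltr_pdivlMr ?div1r // mulr_gt0 // exprn_gt0 // invr_gt0.
Unshelve. all: end_near.
Qed.

Lemma tilde_H_cvgy : tilde_H x @[x --> +oo] --> (1 : R).
Proof.
apply/cvgrPdist_lt => e e0.
have /cvgrPdist_lt/(_ e e0)/nbhs_ballP[d /= d0 Hd] :
    expR (logHR t) @[t --> (0 : R)] --> (1 : R).
  have -> : 1 = expR (logHR 0) by rewrite /logHR subr0 addr0 subrr mul0r add0r expR0.
  apply: is_derive_continuous (is_derive_expR_pt (is_derive_logHR _)).
  by apply/andP; split; lra.
near=> q.
have qQ : q_crit < q by near: q; apply: nbhs_pinfty_gt; exact: num_real.
have qd : 3 / (2 * d) < q by near: q; apply: nbhs_pinfty_gt; exact: num_real.
have [t ht hq] := exists_rootR (ltW qQ).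
rewrite (tilde_HR ht hq); apply: Hd.
have /andP[t0 _] := ht; have q_le := rootR_le ht hq.
rewrite /ball /= sub0r normrN gtr0_norm //.
by move: qd; rewrite ltr_pdivrMr ?mulr_gt0 //; nra.
Unshelve. all: end_near.
Qed.

End TildeH.

Theorem theorem3 (R : realType) :
  (forall x y : R, 0 < x -> x <= y -> y < (Num.sqrt 2)^-1 ->
     tilde_H y <= tilde_H x) /\
  (forall x y : R, (Num.sqrt 2)^-1 <= x -> x <= y ->
     tilde_H x <= tilde_H y) /\
  (tilde_H x @[x --> (0:R)^'+] --> (1:R)) /\
  (tilde_H x @[x --> +oo] --> (1:R)).
Proof.
split; first exact: tilde_H_nonincr.
split; first exact: tilde_H_nondecr.
split; [exact: tilde_H_cvg0 | exact: tilde_H_cvgy].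
Qed.
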